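(* Consider any proper $4$-colouring of $J$ in which none of the $13$ copies $H_c$ ($c\in\Lambda$, $|c|\le\sqrt3$) contains a monochromatic triple. Let $\gamma$ be the colour of the centre $0$, and let $L_k=2e^{i\pi k/3}$ for $k\in\mathbb{Z}/6$ be the linking vertices. Then exactly one of the following holds: (a) all six linking vertices have colour $\gamma$; (b) there is some $k$ such that $L_k,L_{k+1},L_{k+2},L_{k+3}$ have colour $\gamma$, and $L_{k+4},L_{k+5}$ share a common colour different from $\gamma$; (c) there is some $k$ such that $L_k$ and $L_{k+3}$ have colour $\gamma$, and the other four linking vertices share a common colour different from $\gamma$.
   Context: Identify $\mathbb{R}^2$ with $\mathbb{C}$. Let $\Lambda=\{a+b e^{i\pi/3}: a,b\in\mathbb{Z}\}$ be the triangular lattice. For $c\in\mathbb{C}$, let $H_c$ be the unit-distance graph on the $7$ points $c$ and $c+e^{i\pi k/3}$, $k=0,\dots,5$. A monochromatic triple in a colouring of (a copy of) $H$ is a set of three of its $7$ vertices that all receive the same colour. $J$ is the unit-distance graph on the $31$ points of $\Lambda$ at distance at most $\sqrt7$ from $0$. Equivalently, $J$ is the union of the $13$ graphs $H_c$ for $c\in\Lambda$ with $|c|\le\sqrt3$: one centred at $0$, six centred at distance $1$, and six centred at distance $\sqrt3$ from $0$. The linking vertices of $J$ are the six points $L_k=2e^{i\pi k/3}$. A linking diagonal is a pair $\{L_k,L_{k+3}\}$. *)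

(* Points of the triangular lattice Lambda = {a + b*w : a,b in Z},
   w = e^{i pi/3}, are represented by integer pairs (a,b). *)
From Stdlib Require Import ZArith Lia Arith.
Open Scope Z_scope.

Definition pt := (Z * Z)%type.

(* |a + b w|^2 = a^2 + a b + b^2 *)
Definition norm2 (p : pt) : Z := fst p * fst p + fst p * snd p + snd p * snd p.

Definition padd (p q : pt) : pt := (fst p + fst q, snd p + snd q).
Definition psub (p q : pt) : pt := (fst p - fst q, snd p - snd q).
Definition pscale (n : Z) (p : pt) : pt := (n * fst p, n * snd p).

Definition unit_dist (p q : pt) : Prop := norm2 (psub p q) = 1.

Definition inJ (p : pt) : Prop := norm2 p <= 7.

(* w^k = e^{i pi k/3} in lattice coordinates, k taken mod 6 *)
Definition omega_pow (k : Z) : pt :=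
  let r := k mod 6 in
  if Z.eqb r 0 then (1, 0)
  else if Z.eqb r 1 then (0, 1)
  else if Z.eqb r 2 then (-1, 1)
  else if Z.eqb r 3 then (-1, 0)
  else if Z.eqb r 4 then (0, -1)
  else (1, -1).

(* the 7 vertices of H_c: index 0 is c, index i (1<=i<=6) is c + w^(i-1) *)
Definition Hvert (c : pt) (i : nat) : pt :=
  match i with
  | O => c
  | S j => padd c (omega_pow (Z.of_nat j))
  end.

Definition no_mono_triple (col : pt -> nat) (c : pt) : Prop :=
  forall i j l : nat, (i < 7)%nat -> (j < 7)%nat -> (l < 7)%nat ->
    i <> j -> j <> l -> i <> l ->
    ~ (col (Hvert c i) = col (Hvert c j) /\ col (Hvert c j) = col (Hvert c l)).

(* proper 4-colouring of J (colours 0..3); values outside J are irrelevant *)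
Definition proper_4col_J (col : pt -> nat) : Prop :=
  (forall p, inJ p -> (col p < 4)%nat) /\
  (forall p q, inJ p -> inJ q -> unit_dist p q -> col p <> col q).

Definition Lk (k : Z) : pt := pscale 2 (omega_pow k).

Definition caseA (col : pt -> nat) : Prop :=
  forall k : Z, col (Lk k) = col (0, 0).

Definition caseB (col : pt -> nat) : Prop :=
  exists k : Z,
    col (Lk k) = col (0, 0) /\ col (Lk (k + 1)) = col (0, 0) /\
    col (Lk (k + 2)) = col (0, 0) /\ col (Lk (k + 3)) = col (0, 0) /\
    col (Lk (k + 4)) = col (Lk (k + 5)) /\ col (Lk (k + 4)) <> col (0, 0).

Definition caseC (col : pt -> nat) : Prop :=
  exists k : Z,
    col (Lk k) = col (0, 0) /\ col (Lk (k + 3)) = col (0, 0) /\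
    col (Lk (k + 1)) = col (Lk (k + 2)) /\ col (Lk (k + 2)) = col (Lk (k + 4)) /\
    col (Lk (k + 4)) = col (Lk (k + 5)) /\ col (Lk (k + 1)) <> col (0, 0).

Definition exactly_one (A B C : Prop) : Prop :=
  (A /\ ~ B /\ ~ C) \/ (~ A /\ B /\ ~ C) \/ (~ A /\ ~ B /\ C).

From Stdlib Require Import ZArith List Lia Bool.
Import ListNotations.
Open Scope Z_scope.

(* The statement is a finite check. A colouring of J is determined by its 31 values; an
   exhaustive search assigns colours 0..3 vertex by vertex, abandoning a branch as soon as
   an edge of J or a triple of some H_c becomes monochromatic, and verifies that each
   surviving colouring satisfies exactly one of (a), (b), (c). Periodicity of L_k lets the
   three cases be decided with k ranging over 0..5 only. *)

Definition linking_indices : list Z := [0; 1; 2; 3; 4; 5].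

Lemma mod6_in_linking_indices (k : Z) : In (k mod 6) linking_indices.
Proof. pose proof (Z.mod_pos_bound k 6). simpl. lia. Qed.

Lemma Lk_mod6 (k : Z) : Lk (k mod 6) = Lk k.
Proof. unfold Lk, omega_pow. now rewrite Z.mod_mod by lia. Qed.

Lemma Lk_add_mod6 (k j : Z) : Lk (k mod 6 + j) = Lk (k + j).
Proof. unfold Lk, omega_pow. now rewrite Zplus_mod_idemp_l. Qed.

Lemma norm2_Lk (k : Z) : norm2 (Lk k) = 4.
Proof. unfold Lk, omega_pow. now repeat destruct (Z.eqb _ _). Qed.

Section CaseDecision.
Variable c : pt -> nat.
Let g := c (0, 0).

Definition caseAb : bool := forallb (fun k => Nat.eqb (c (Lk k)) g) linking_indices.

Definition caseB_at (k : Z) : bool :=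
  Nat.eqb (c (Lk k)) g && Nat.eqb (c (Lk (k + 1))) g && Nat.eqb (c (Lk (k + 2))) g &&
  Nat.eqb (c (Lk (k + 3))) g && Nat.eqb (c (Lk (k + 4))) (c (Lk (k + 5))) &&
  negb (Nat.eqb (c (Lk (k + 4))) g).

Definition caseC_at (k : Z) : bool :=
  Nat.eqb (c (Lk k)) g && Nat.eqb (c (Lk (k + 3))) g &&
  Nat.eqb (c (Lk (k + 1))) (c (Lk (k + 2))) && Nat.eqb (c (Lk (k + 2))) (c (Lk (k + 4))) &&
  Nat.eqb (c (Lk (k + 4))) (c (Lk (k + 5))) && negb (Nat.eqb (c (Lk (k + 1))) g).

Definition caseBb : bool := existsb caseB_at linking_indices.
Definition caseCb : bool := existsb caseC_at linking_indices.

Lemma caseAb_spec : caseAb = true <-> caseA c.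
Proof.
  unfold caseAb, caseA. rewrite forallb_forall. split.
  - intros H k. rewrite <- Lk_mod6. apply Nat.eqb_eq, H, mod6_in_linking_indices.
  - intros H k _. now apply Nat.eqb_eq.
Qed.

Lemma caseBb_spec : caseBb = true <-> caseB c.
Proof.
  unfold caseBb, caseB. rewrite existsb_exists.
  split; intros [k Hk]; [destruct Hk as [_ Hk]; exists k | exists (k mod 6); split].
  - unfold caseB_at in Hk. rewrite !andb_true_iff, negb_true_iff, !Nat.eqb_eq, Nat.eqb_neq in Hk.
    tauto.
  - apply mod6_in_linking_indices.
  - unfold caseB_at. rewrite !Lk_add_mod6, Lk_mod6.
    rewrite !andb_true_iff, negb_true_iff, !Nat.eqb_eq, Nat.eqb_neq. tauto.
Qed.

Lemma caseCb_spec : caseCb = true <-> caseC c.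
Proof.
  unfold caseCb, caseC. rewrite existsb_exists.
  split; intros [k Hk]; [destruct Hk as [_ Hk]; exists k | exists (k mod 6); split].
  - unfold caseC_at in Hk. rewrite !andb_true_iff, negb_true_iff, !Nat.eqb_eq, Nat.eqb_neq in Hk.
    tauto.
  - apply mod6_in_linking_indices.
  - unfold caseC_at. rewrite !Lk_add_mod6, Lk_mod6.
    rewrite !andb_true_iff, negb_true_iff, !Nat.eqb_eq, Nat.eqb_neq. tauto.
Qed.

End CaseDecision.

Definition xor3 (x y z : bool) : bool :=
  (x && negb y && negb z) || (negb x && y && negb z) || (negb x && negb y && z).

Lemma exactly_one_xor3 (P Q R : Prop) (x y z : bool) :
  (x = true <-> P) -> (y = true <-> Q) -> (z = true <-> R) ->
  xor3 x y z = true -> exactly_one P Q R.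
Proof.
  unfold exactly_one; intros <- <- <-.
  destruct x, y, z; simpl; intros H; try discriminate;
    [left | right; left | right; right]; repeat split; discriminate.
Qed.

Lemma exactly_one_cases_ext (c d : pt -> nat) :
  c (0, 0) = d (0, 0) -> (forall k, c (Lk k) = d (Lk k)) ->
  exactly_one (caseA c) (caseB c) (caseC c) -> exactly_one (caseA d) (caseB d) (caseC d).
Proof.
  intros H0 HL. unfold exactly_one, caseA, caseB, caseC. rewrite H0.
  now setoid_rewrite HL.
Qed.

Definition pt_eqb (p q : pt) : bool := Z.eqb (fst p) (fst q) && Z.eqb (snd p) (snd q).

Lemma pt_eqb_spec (p q : pt) : pt_eqb p q = true <-> p = q.
Proof.
  destruct p, q; unfold pt_eqb; simpl.
  rewrite andb_true_iff, !Z.eqb_eq. split; [intros [-> ->] | intros [=]]; auto.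
Qed.

Definition colouring := list (pt * nat).

Fixpoint lookup (a : colouring) (p : pt) : option nat :=
  match a with
  | [] => None
  | (q, x) :: a' => if pt_eqb q p then Some x else lookup a' p
  end.

Definition colour_of (a : colouring) (p : pt) : nat :=
  match lookup a p with Some x => x | None => 0%nat end.

Definition restrict (col : pt -> nat) (l : list pt) : colouring := map (fun p => (p, col p)) l.

Lemma lookup_restrict (col : pt -> nat) (l : list pt) (p : pt) (x : nat) :
  lookup (restrict col l) p = Some x -> x = col p.
Proof.
  induction l as [|q l IH]; simpl; [discriminate|].
  destruct (pt_eqb q p) eqn:E; [|exact IH].
  apply pt_eqb_spec in E as ->. congruence.
Qed.

Lemma lookup_restrict_In (col : pt -> nat) (l : list pt) (p : pt) :
  In p l -> lookup (restrict col l) p = Some (col p).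
Proof.
  induction l as [|q l IH]; simpl; [tauto|].
  destruct (pt_eqb q p) eqn:E.
  - now apply pt_eqb_spec in E as ->.
  - intros [->|Hp]; [|auto]. now rewrite (proj2 (pt_eqb_spec p p) eq_refl) in E.
Qed.

Definition monochromatic (a : colouring) (ps : list pt) : bool :=
  match ps with
  | [] => false
  | p :: ps' =>
      match lookup a p with
      | None => false
      | Some x => forallb (fun q => match lookup a q with Some y => Nat.eqb y x | None => false end) ps'
      end
  end.

Lemma monochromatic_restrict (col : pt -> nat) (l : list pt) (p : pt) (ps : list pt) :
  monochromatic (restrict col l) (p :: ps) = true -> forall q, In q ps -> col q = col p.
Proof.
  simpl. destruct (lookup (restrict col l) p) as [x|] eqn:Ep; [|discriminate].
  apply lookup_restrict in Ep as ->. rewrite forallb_forall. intros H q Hq.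
  specialize (H q Hq). destruct (lookup (restrict col l) q) as [y|] eqn:Eq; [|discriminate].
  apply lookup_restrict in Eq as ->. now apply Nat.eqb_eq.
Qed.

Definition colours : list nat := [0; 1; 2; 3]%nat.

Section Search.
Variable accept : colouring -> bool.

(* A schedule lists the vertices in the order they are coloured, each with the constraints
   to test once it has received its colour. The test is an [if] rather than [||]: under
   call-by-value evaluation [orb] would evaluate the recursive call and lose the pruning. *)
Fixpoint search (sched : list (pt * list (list pt))) (a : colouring) : bool :=
  match sched with
  | [] => accept a
  | (p, css) :: sched' =>
      forallb (fun x => let a' := (p, x) :: a in
                  if existsb (monochromatic a') css then true else search sched' a') colours
  end.

Lemma search_sound (col : pt -> nat) (sched : list (pt * list (list pt))) (l : list pt) :
  (forall p css, In (p, css) sched ->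
     (col p < 4)%nat /\ forall cs l', In cs css -> monochromatic (restrict col l') cs = false) ->
  search sched (restrict col l) = true -> accept (restrict col (rev (map fst sched) ++ l)) = true.
Proof.
  revert l; induction sched as [|[p css] sched IH]; intros l Hsched Hs; [exact Hs|].
  destruct (Hsched p css (or_introl eq_refl)) as [Hp Hcss].
  cbn [search map fst rev] in Hs |- *. rewrite forallb_forall in Hs.
  assert (Hx : In (col p) colours) by (simpl; lia).
  specialize (Hs _ Hx). change ((p, col p) :: restrict col l) with (restrict col (p :: l)) in Hs.
  rewrite <- app_assoc. apply IH; [intros; apply Hsched; now right|].
  destruct (existsb _ css) eqn:E; [|exact Hs].
  apply existsb_exists in E as [cs [Hcs Hm]]. now rewrite Hcss in Hm.
Qed.

End Search.

Definition mem (p : pt) (l : list pt) : bool := existsb (pt_eqb p) l.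

(* Each constraint is tested once, right after its last vertex has been coloured. *)
Fixpoint schedule (css : list (list pt)) (coloured : list pt) (ps : list pt)
  : list (pt * list (list pt)) :=
  match ps with
  | [] => []
  | p :: ps' =>
      let coloured' := p :: coloured in
      (p, filter (fun cs => mem p cs && forallb (fun q => mem q coloured') cs) css)
        :: schedule css coloured' ps'
  end.

Lemma schedule_vertices (css : list (list pt)) (coloured ps : list pt) :
  map fst (schedule css coloured ps) = ps.
Proof. revert coloured; induction ps as [|p ps IH]; intros; simpl; congruence. Qed.

Lemma In_schedule (css css' : list (list pt)) (coloured ps : list pt) (p : pt) :
  In (p, css') (schedule css coloured ps) -> In p ps /\ incl css' css.
Proof.
  revert coloured; induction ps as [|q ps IH]; intros coloured; simpl; [tauto|].
  intros [[= -> <-]|H].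
  - split; [now left | intros cs Hcs; now apply filter_In in Hcs].
  - apply IH in H as [Hp Hincl]. auto.
Qed.

Definition window : list Z := map (fun n => Z.of_nat n - 3) (seq 0 7).
Definition box : list pt := list_prod window window.

Lemma In_box (p : pt) : -3 <= fst p <= 3 -> -3 <= snd p <= 3 -> In p box.
Proof.
  destruct p as [x y]; cbn [fst snd]; intros Hx Hy. unfold box. apply in_prod; apply in_map_iff.
  - exists (Z.to_nat (x + 3)). rewrite in_seq. lia.
  - exists (Z.to_nat (y + 3)). rewrite in_seq. lia.
Qed.

(* Listing the vertices by increasing distance from 0 keeps the search tree small. *)
Definition vertices_J : list pt :=
  flat_map (fun n => filter (fun p => norm2 p =? Z.of_nat n) box) (seq 0 8).

Lemma In_vertices_J (p : pt) : In p vertices_J <-> inJ p.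
Proof.
  unfold vertices_J, inJ. rewrite in_flat_map. split.
  - intros [n [Hn Hp]]. apply in_seq in Hn. apply filter_In in Hp as [_ Hp].
    apply Z.eqb_eq in Hp. lia.
  - intros Hp. assert (0 <= norm2 p) by (unfold norm2; nia).
    exists (Z.to_nat (norm2 p)). rewrite in_seq, filter_In, Z.eqb_eq, Z2Nat.id by lia.
    split; [lia|split; [|reflexivity]].
    destruct p as [x y]; unfold norm2 in *; cbn [fst snd] in *. apply In_box; cbn [fst snd]; nia.
Qed.

Definition centres_J : list pt := filter (fun c => norm2 c <=? 3) box.

Definition edge_constraints : list (list pt) :=
  flat_map (fun p => map (fun q => [p; q]) (filter (fun q => norm2 (psub p q) =? 1) vertices_J))
    vertices_J.

Definition index_triples : list (nat * nat * nat) :=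
  flat_map (fun i => flat_map (fun j => map (fun l => (i, j, l)) (seq (S j) (6 - j)))
    (seq (S i) (6 - i))) (seq 0 7).

Definition triple_constraints : list (list pt) :=
  flat_map (fun c => map (fun '(i, j, l) => [Hvert c i; Hvert c j; Hvert c l]) index_triples)
    centres_J.

Section GoodColouring.
Variable col : pt -> nat.
Hypothesis Hproper : proper_4col_J col.
Hypothesis Hnomono : forall c : pt, norm2 c <= 3 -> no_mono_triple col c.

Lemma edge_constraint_not_monochromatic (cs : list pt) (l : list pt) :
  In cs edge_constraints -> monochromatic (restrict col l) cs = false.
Proof.
  unfold edge_constraints. rewrite in_flat_map. intros [p [Hp Hcs]].
  apply in_map_iff in Hcs as [q [<- Hq]]. apply filter_In in Hq as [Hq Hpq].
  apply Bool.not_true_iff_false. intros Hm.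
  apply (proj2 Hproper p q).
  - exact (proj1 (In_vertices_J p) Hp).
  - exact (proj1 (In_vertices_J q) Hq).
  - now apply Z.eqb_eq.
  - symmetry. apply (monochromatic_restrict col l p [q] Hm). now left.
Qed.

Lemma triple_constraint_not_monochromatic (cs : list pt) (l : list pt) :
  In cs triple_constraints -> monochromatic (restrict col l) cs = false.
Proof.
  unfold triple_constraints. rewrite in_flat_map. intros [c [Hc Hcs]].
  apply filter_In in Hc as [_ Hc]. apply Z.leb_le in Hc.
  apply in_map_iff in Hcs as [[[i j] k] [<- Hijk]].
  unfold index_triples in Hijk. rewrite in_flat_map in Hijk. destruct Hijk as [i' [Hi Hijk]].
  rewrite in_flat_map in Hijk. destruct Hijk as [j' [Hj Hijk]].
  apply in_map_iff in Hijk as [k' [[= -> -> ->] Hk]]. rewrite in_seq in Hi, Hj, Hk.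
  apply Bool.not_true_iff_false. intros Hm.
  pose proof (monochromatic_restrict col l _ _ Hm) as Heq.
  apply (Hnomono c Hc i j k); try lia.
  rewrite (Heq (Hvert c j)), (Heq (Hvert c k)) by (simpl; auto). auto.
Qed.

End GoodColouring.

Definition xor3_cases (a : colouring) : bool :=
  let c := colour_of a in xor3 (caseAb c) (caseBb c) (caseCb c).

Lemma search_J_succeeds :
  search xor3_cases (schedule (edge_constraints ++ triple_constraints) [] vertices_J) [] = true.
Proof. vm_compute. reflexivity. Qed.

Lemma xor3_cases_good_colouring (col : pt -> nat)
  (Hproper : proper_4col_J col)
  (Hnomono : forall c : pt, norm2 c <= 3 -> no_mono_triple col c) :
  xor3_cases (restrict col (rev vertices_J)) = true.
Proof.
  assert (Hsched : forall p css,
    In (p, css) (schedule (edge_constraints ++ triple_constraints) [] vertices_J) ->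
    (col p < 4)%nat /\ forall cs l, In cs css -> monochromatic (restrict col l) cs = false).
  { intros p css Hp. apply In_schedule in Hp as [Hp Hincl]. split.
    - exact (proj1 Hproper p (proj1 (In_vertices_J p) Hp)).
    - intros cs l Hcs. apply Hincl, in_app_or in Hcs as [Hcs|Hcs].
      + exact (edge_constraint_not_monochromatic col Hproper cs l Hcs).
      + exact (triple_constraint_not_monochromatic col Hnomono cs l Hcs). }
  pose proof (search_sound xor3_cases col _ [] Hsched search_J_succeeds) as Haccept.
  now rewrite schedule_vertices, app_nil_r in Haccept.
Qed.

Lemma exactly_one_cases_of_accept (col : pt -> nat) :
  xor3_cases (restrict col (rev vertices_J)) = true ->
  exactly_one (caseA col) (caseB col) (caseC col).
Proof.
  unfold xor3_cases; cbv zeta. set (c := colour_of (restrict col (rev vertices_J))).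
  assert (Hc : forall p, inJ p -> c p = col p).
  { intros p Hp. unfold c, colour_of.
    now rewrite lookup_restrict_In by now apply in_rev, In_vertices_J. }
  intros Haccept. apply (exactly_one_cases_ext c).
  - apply Hc. unfold inJ, norm2. simpl. lia.
  - intros k. apply Hc. unfold inJ. rewrite norm2_Lk. lia.
  - exact (exactly_one_xor3 _ _ _ _ _ _ (caseAb_spec c) (caseBb_spec c) (caseCb_spec c) Haccept).
Qed.

Theorem mainTheorem3 (col : pt -> nat)
  (Hproper : proper_4col_J col)
  (Hnomono : forall c : pt, norm2 c <= 3 -> no_mono_triple col c) :
  exactly_one (caseA col) (caseB col) (caseC col).
Proof.
  apply exactly_one_cases_of_accept, xor3_cases_good_colouring; assumption.
Qed.
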